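(* The linear map $\Theta:\mathbf H_o\to\mathbf{FQSym}$ defined on ordered forests by $\Theta(\mathbb F)=\sum_{\sigma\in S_{\mathbb F}}\sigma$ is a morphism of Hopf algebras, homogeneous of degree $0$.
   Context: A rooted forest is a finite graph each of whose components is a tree with a distinguished root; edges are oriented towards the roots, and for distinct vertices $v,w$ we write $v\twoheadrightarrow w$ if there is an oriented path from $v$ to $w$. An ordered forest with $n$ vertices is a rooted forest with a total order on its vertices, identifying the vertex set with $\{1,\dots,n\}$ (isomorphic ordered forests are identified). $\mathbf H_o$ is the $K$-vector space ($K=\mathbb R$ or $\mathbb C$) with basis all ordered forests, including the empty forest $1$, graded by number of vertices, with product $\mathbb F\mathbb G$ = disjoint union where the vertices of $\mathbb F$ (with $k$ vertices) keep labels $1..k$ and vertex $j$ of $\mathbb G$ gets label $k+j$, and coproduct $\Delta(\mathbb F)=\sum_{\vec v\models V(\mathbb F)}\mathrm{Roo}_{\vec v}\mathbb F\otimes\mathrm{Lea}_{\vec v}\mathbb F$, where an admissible cut $\vec v$ is a (possibly empty) set of vertices no two of which satisfy $v\twoheadrightarrow w$, $\mathrm{Lea}_{\vec v}\mathbb F$ is the subforest on $\vec v\cup\{w:\exists v\in\vec v, w\twoheadrightarrow v\}$, $\mathrm{Roo}_{\vec v}\mathbb F$ is the subforest on the remaining vertices, both ordered by restriction. $\Sigma_n$ is the symmetric group with $(\sigma\circ\tau)(i)=\sigma(\tau(i))$; for $\sigma\in\Sigma_k,\tau\in\Sigma_l$, $(\sigma\otimes\tau)(i)=\sigma(i)$ ($i\le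 k$), $=k+\tau(i-k)$ ($i>k$). $Sh(k,l)=\{\zeta\in\Sigma_{k+l}:\zeta^{-1}(1)<\dots<\zeta^{-1}(k),\ \zeta^{-1}(k+1)<\dots<\zeta^{-1}(k+l)\}$. $\mathbf{FQSym}$ is the graded vector space with basis $\bigsqcup_{n\ge0}\Sigma_n$ (degree $n$ for $\Sigma_n$; the element of $\Sigma_0$ is the unit $1$), product $\sigma\cdot\tau=\sum_{\epsilon\in Sh(k,l)}(\sigma\otimes\tau)\circ\epsilon$ for $\sigma\in\Sigma_k,\tau\in\Sigma_l$, and coproduct $\Delta(\sigma)=\sum_{k=0}^n\sigma_1^{(k)}\otimes\sigma_2^{(k)}$ for $\sigma\in\Sigma_n$, where $\sigma_1^{(k)}$, $\sigma_2^{(k)}$ are the standardizations of the words $(\sigma(1),\dots,\sigma(k))$ and $(\sigma(k+1),\dots,\sigma(n))$ (standardization replaces the letters by $1,2,\dots$ preserving their relative order); equivalently $\sigma=\zeta^{-1}\circ(\sigma_1^{(k)}\otimes\sigma_2^{(k)})$ with $\zeta\in Sh(k,n-k)$. For an ordered forest $\mathbb F$ with $n$ vertices, $S_{\mathbb F}$ is the set of $\sigma\in\Sigma_n$ such that $i\twoheadrightarrow j$ implies $\sigma^{-1}(i)>\sigma^{-1}(j)$. *)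

From HB Require Import structures.
From mathcomp Require Import all_boot all_order all_algebra all_fingroup.
Set Implicit Arguments. Unset Strict Implicit. Unset Printing Implicit Defensive.
Import GRing.Theory Num.Theory.
Local Open Scope ring_scope.

(* ---------- Ordered forests ----------
   An ordered forest on n vertices (vertices 'I_n = {0..n-1}, i.e. the paper's
   labels 1..n shifted by one) is given by its parent function: p v = Some w
   iff there is an edge v -> w (oriented towards the root); roots have p v = None.
   Since an isomorphism of ordered forests must preserve the total order, the
   labelled parent function is a canonical representative of the iso class. *)

Definition rawforest n := {ffun 'I_n -> option 'I_n}.

Definition edge n (p : rawforest n) : rel 'I_n := fun a b => p a == Some b.

Definition reach n (p : rawforest n) (v w : 'I_n) : bool :=
  (v != w) && connect (edge p) v w.

Definition acyclic n (p : rawforest n) : bool :=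
  [forall v, forall w, edge p v w ==> ~~ connect (edge p) w v].

Definition forest n := {p : rawforest n | acyclic p}.

(* encoding of a raw forest as a list (used to compare forests of different
   (index) types) *)
Definition enc n (p : rawforest n) : seq (option nat) :=
  [seq omap (@nat_of_ord n) (p i) | i <- enum 'I_n].

(* disjoint union FG: vertices of F keep labels, vertex j of G gets k + j *)
Definition rawconcat k l (f : rawforest k) (g : rawforest l) : rawforest (k + l) :=
  [ffun i => match split i with
             | inl a => omap (@lshift k l) (f a)
             | inr b => omap (@rshift k l) (g b)
             end].

(* induced subforest on A, vertices renumbered in increasing order *)
Definition rawrestr n (p : rawforest n) (A : {set 'I_n}) : rawforest #|A| :=
  [ffun j => obind (fun w => insub (index w (enum A))) (p (enum_val j))].

Definition admissible n (p : rawforest n) (V : {set 'I_n}) : bool :=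
  [forall v in V, forall w in V, ~~ reach p v w].

Definition LeaSet n (p : rawforest n) (V : {set 'I_n}) : {set 'I_n} :=
  [set w | (w \in V) || [exists v in V, reach p w v]].

Definition RooSet n (p : rawforest n) (V : {set 'I_n}) : {set 'I_n} :=
  ~: LeaSet p V.

Definition inS n (p : rawforest n) (s : 'S_n) : bool :=
  [forall i, forall j, reach p i j ==> ((s^-1)%g j < (s^-1)%g i)%N].

(* ---------- homogeneous components ----------
   degree-n component of H_o : K-valued coefficient functions on forests of
   size n; degree-n component of FQSym : coefficient functions on 'S_n.
   Tensor product of two (free, finite-dim) components: coefficient functions on
   pairs of basis elements. *)

Section Alg.
Variable K : numFieldType.

Definition Hcomp n := {ffun forest n -> K}.
Definition Qcomp n := {ffun 'S_n -> K}.
Definition HHcomp a b := {ffun (forest a * forest b)%type -> K}.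
Definition QQcomp a b := {ffun ('S_a * 'S_b)%type -> K}.

Definition mulH k l (x : Hcomp k) (y : Hcomp l) : Hcomp (k + l) :=
  [ffun H : forest (k + l) =>
     \sum_(F : forest k) \sum_(G : forest l | val H == rawconcat (val F) (val G))
        x F * y G].

(* unit of H_o : the empty forest *)
Definition unitH : Hcomp 0 := [ffun _ => 1].
(* counit of H_o restricted to degree 0 (it vanishes in positive degree) *)
Definition counitH0 (x : Hcomp 0) : K := \sum_(F : forest 0) x F.

Definition deltaH a b (x : Hcomp (a + b)) : HHcomp a b :=
  [ffun q : forest a * forest b =>
     \sum_(F : forest (a + b))
       \sum_(V : {set 'I_(a + b)} |
               [&& admissible (val F) V,
                   enc (rawrestr (val F) (RooSet (val F) V)) == enc (val q.1) &
                   enc (rawrestr (val F) (LeaSet (val F) V)) == enc (val q.2)])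
         x F].

Definition ptens k l (s : 'S_k) (t : 'S_l) (i : 'I_(k + l)) : 'I_(k + l) :=
  match split i with
  | inl a => lshift l (s a)
  | inr b => rshift k (t b)
  end.

Definition isShuffle k l (e : 'S_(k + l)) : bool :=
  [forall i : 'I_k, forall j : 'I_k,
     (i < j)%N ==> ((e^-1)%g (lshift l i) < (e^-1)%g (lshift l j))%N] &&
  [forall i : 'I_l, forall j : 'I_l,
     (i < j)%N ==> ((e^-1)%g (rshift k i) < (e^-1)%g (rshift k j))%N].

Definition mulQ k l (x : Qcomp k) (y : Qcomp l) : Qcomp (k + l) :=
  [ffun pi : 'S_(k + l) =>
     \sum_(s : 'S_k) \sum_(t : 'S_l)
       \sum_(e : 'S_(k + l) | isShuffle e && [forall i, pi i == ptens s t (e i)])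
         x s * y t].

Definition unitQ : Qcomp 0 := [ffun _ => 1].
Definition counitQ0 (x : Qcomp 0) : K := \sum_(s : 'S_0) x s.

(* al is the standardization of the word (w 0, ..., w (m-1)) (distinct letters) *)
Definition isStd m n (al : 'S_m) (w : 'I_m -> 'I_n) : bool :=
  [forall i, forall j, (al i < al j)%N == (w i < w j)%N].

Definition deltaQ a b (x : Qcomp (a + b)) : QQcomp a b :=
  [ffun q : 'S_a * 'S_b =>
     \sum_(s : 'S_(a + b) | isStd q.1 (fun i => s (lshift b i)) &&
                            isStd q.2 (fun i => s (rshift a i)))
        x s].

Definition Theta n (x : Hcomp n) : Qcomp n :=
  [ffun s : 'S_n => \sum_(F : forest n | inS (val F) s) x F].

Definition Theta2 a b (z : HHcomp a b) : QQcomp a b :=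
  [ffun q : 'S_a * 'S_b =>
     \sum_(p : forest a * forest b | inS (val p.1) q.1 && inS (val p.2) q.2) z p].

End Alg.

From mathcomp Require Import all_boot all_order all_algebra all_fingroup.
Set Implicit Arguments. Unset Strict Implicit. Unset Printing Implicit Defensive.
Import GRing.Theory.

(* Multiplicativity: a permutation [pi] of [k + l] is [(s (x) t) o e] for a
   unique shuffle [e], namely with [s], [t] the permutations sorting the
   positions [pi^-1] assigns to the first [k] and to the last [l] letters; as
   no path of [F G] joins [F] to [G], [pi] lies in [S_(F G)] iff [s] lies in
   [S_F] and [t] in [S_G].
   Comultiplicativity: if [s] lies in [S_F], the set [L] of vertices that
   [s^-1] sends to the last [b] positions is closed under descendants, so it
   is [Lea] of exactly one admissible cut (the maximal elements of [L]).
   Conversely an admissible cut with [#|Roo| = a], together with [q1] in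
   [S_Roo] and [q2] in [S_Lea], determines exactly one [s] standardizing to
   [(q1, q2)] with that [L], and [s] lies in [S_F].  Hence both sides of
   [Delta o Theta = (Theta (x) Theta) o Delta] count the same admissible cuts. *)

Section ConnectHomo.
Variables (T U : finType) (h : T -> U) (e : rel U) (e' : rel T).
Hypothesis h_edge : forall x y, e' x y -> e (h x) (h y).

Lemma homo_connect x y : connect e' x y -> connect e (h x) (h y).
Proof.
move=> /connectP [p pth ->]; apply/connectP; exists (map h p).
  by rewrite path_map; apply: sub_path pth => a b /h_edge.
by rewrite last_map.
Qed.
End ConnectHomo.

Section ConnectImage.
Variables (T U : finType) (h : T -> U) (e : rel U) (e' : rel T).
Hypothesis h_inj : injective h.
Hypothesis h_edgeE : forall x y, e (h x) (h y) = e' x y.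
Hypothesis img_closed : forall x u, e (h x) u -> exists y, u = h y.

Lemma connect_img x u :
  connect e (h x) u -> exists2 y, u = h y & connect e' x y.
Proof.
move=> /connectP [p pth ->]; elim: p x pth => [|v p IHp] x /=.
  by move=> _; exists x => //; apply: connect0.
move=> /andP [exv pth]; have [y vy] := img_closed exv; subst v.
have [z -> cyz] := IHp y pth; exists z => //.
by apply: connect_trans cyz; apply: connect1; rewrite -h_edgeE.
Qed.

Lemma connect_imgE x y : connect e (h x) (h y) = connect e' x y.
Proof.
apply/idP/idP; last by apply: homo_connect => a b; rewrite h_edgeE.
by move=> /connect_img [z /h_inj ->].
Qed.
End ConnectImage.

Section Acyclic.
Variables (n : nat) (p : rawforest n).
Hypothesis p_acyclic : acyclic p.

Lemma acyclic_edge v w : edge p v w -> ~~ connect (edge p) w v.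
Proof. by move: p_acyclic => /forallP/(_ v)/forallP/(_ w)/implyP. Qed.

Lemma connect_antisym u w :
  connect (edge p) u w -> connect (edge p) w u -> u = w.
Proof.
move=> /connectP [[|v q] /= pth ->] // cwu.
move: pth => /andP [euv pth].
have cvw : connect (edge p) v (last v q) by apply/connectP; exists q.
by move: (acyclic_edge euv); rewrite (connect_trans cvw cwu).
Qed.

Lemma edge_reach u w : edge p u w -> reach p u w.
Proof.
move=> euw; rewrite /reach (connect1 euw) andbT; apply/eqP => E; subst w.
by move: (acyclic_edge euw); rewrite connect0.
Qed.

Lemma reach_asym u w : reach p u w -> ~~ reach p w u.
Proof.
move=> /andP [nuw cuw]; apply/negP => /andP [_ cwu].
by move: nuw; rewrite (connect_antisym cuw cwu) eqxx.
Qed.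

Lemma reach_trans u w x : reach p u w -> reach p w x -> reach p u x.
Proof.
move=> ruw /andP [nwx cwx]; move: (ruw) => /andP [nuw cuw].
rewrite /reach (connect_trans cuw cwx) andbT; apply/eqP => E; subst x.
by move: (reach_asym ruw); rewrite /reach nwx cwx.
Qed.
End Acyclic.

Lemma enum_val_ltn n (A : {set 'I_n}) (i j : 'I_#|A|) :
  (enum_val i < enum_val j) = (i < j).
Proof.
have sorted_A : sorted ltn (map val (enum A)).
  rewrite -[enum _](eq_filter (mem_enum _)).
  rewrite -(eq_filter (mem_map val_inj _)) -filter_map.
  by rewrite (sorted_filter ltn_trans) // unlock val_ord_enum iota_ltn_sorted.
have mono (x y : 'I_#|A|) : x < y -> enum_val x < enum_val y.
  move=> lxy; have sz : size (enum A) = #|A| by rewrite cardE.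
  rewrite (enum_val_nth (enum_val x) x) (enum_val_nth (enum_val x) y).
  rewrite -!(nth_map (enum_val x) 0 val) ?sz ?ltn_ord //.
  by apply: (sorted_ltn_nth ltn_trans) => //; rewrite inE size_map sz ltn_ord.
case: (ltngtP i j) => [lij|lji|eij]; first exact: mono.
  by apply/negbTE; rewrite -leqNgt ltnW // mono.
by rewrite (val_inj eij) ltnn.
Qed.

Lemma card_ltn_ord m (k : 'I_m) : #|[set x : 'I_m | x < k]| = k.
Proof.
have le_km : k <= m := ltnW (ltn_ord k).
have -> : [set x : 'I_m | x < k] = widen_ord le_km @: [set: 'I_k].
  apply/setP => x; rewrite inE; apply/idP/imsetP => [xk|[y _ ->]].
    by exists (Ordinal xk) => //; apply: val_inj.
  exact: ltn_ord y.
rewrite card_imset ?cardsT ?card_ord //.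
by move=> a b /(congr1 val) /= /val_inj.
Qed.

Lemma perm_rank m (r : 'S_m) a : val (r a) = #|[set b | r b < r a]|.
Proof.
have -> : [set b | r b < r a] = r @^-1: [set x : 'I_m | x < r a].
  by apply/setP => b; rewrite !inE.
by rewrite card_preimset ?card_ltn_ord //; apply: perm_inj.
Qed.

Lemma perm_ltn_inj m (r r' : 'S_m) :
  (forall a b, (r a < r b) = (r' a < r' b)) -> r = r'.
Proof.
move=> H; apply/permP => a; apply: val_inj.
by rewrite (perm_rank r) (perm_rank r'); apply: eq_card => b; rewrite !inE H.
Qed.

Lemma exists_std m (w : 'I_m -> nat) : injective w ->
  exists r : 'S_m, forall a b, (r a < r b) = (w a < w b).
Proof.
move=> w_inj; pose rk a := #|[set b | w b < w a]|.
have rk_lt a : rk a < m.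
  rewrite -[m]card_ord -cardsT; apply: proper_card; apply/properP.
  by split; [exact: subsetT | exists a; rewrite ?inE ?ltnn].
have rk_mono a b : w a < w b -> rk a < rk b.
  move=> lab; apply: proper_card; apply/properP; split.
    by apply/subsetP => c; rewrite !inE => /ltn_trans; apply.
  by exists a; rewrite !inE ?lab ?ltnn.
pose rko a := Ordinal (rk_lt a).
have rkoE a b : (rko a < rko b) = (w a < w b).
  rewrite /=; case: (ltngtP (w a) (w b)) => [/rk_mono //|lba|eab].
    by apply/negbTE; rewrite -leqNgt ltnW // rk_mono.
  by rewrite (w_inj _ _ eab) ltnn.
have rko_inj : injective rko.
  move=> a b E; apply: w_inj; apply/eqP.
  by rewrite eqn_leq leqNgt -rkoE E ltnn /= leqNgt -rkoE E ltnn.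
by exists (perm rko_inj) => a b; rewrite !permE rkoE.
Qed.

Definition sorts m (w : 'I_m -> nat) (s : 'S_m) :=
  [forall i : 'I_m, forall j : 'I_m, (i < j) ==> (w (s i) < w (s j))].

Lemma sorts_unique m (w : 'I_m -> nat) : injective w ->
  exists2 s0 : 'S_m, forall s, sorts w s = (s == s0)
  & forall a b, ((s0^-1)%g a < (s0^-1)%g b) = (w a < w b).
Proof.
move=> w_inj; have [r Hr] := exists_std w_inj.
exists (r^-1)%g; last by move=> a b; rewrite invgK Hr.
move=> s; apply/idP/eqP => [/forallP sorted_s|->]; last first.
  by apply/forallP => i; apply/forallP => j; apply/implyP => lij; rewrite -Hr !permKV.
suff <- : (s^-1)%g = r by rewrite invgK.
apply: perm_ltn_inj => a b; rewrite Hr.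
case: (ltngtP ((s^-1)%g a) ((s^-1)%g b)) => [lab|lba|eab].
- by move: (sorted_s ((s^-1)%g a)) => /forallP/(_ ((s^-1)%g b))/implyP/(_ lab); rewrite !permKV.
- move: (sorted_s ((s^-1)%g b)) => /forallP/(_ ((s^-1)%g a))/implyP/(_ lba).
  by rewrite !permKV => lt; apply/esym/negbTE; rewrite -leqNgt ltnW.
- by rewrite (perm_inj (val_inj eab)) ltnn.
Qed.

Lemma split_lshift k l (a : 'I_k) : split (lshift l a) = inl a.
Proof. exact: (unsplitK (inl _ a)). Qed.

Lemma split_rshift k l (b : 'I_l) : split (rshift k b) = inr b.
Proof. exact: (unsplitK (inr _ b)). Qed.

Section Concat.
Variables (k l : nat) (f : rawforest k) (g : rawforest l).
Let c := rawconcat f g.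

Lemma edge_concat_ll a a' : edge c (lshift l a) (lshift l a') = edge f a a'.
Proof. by rewrite /edge /c /rawconcat ffunE split_lshift; case: (f a). Qed.

Lemma edge_concat_rr b b' : edge c (rshift k b) (rshift k b') = edge g b b'.
Proof.
rewrite /edge /c /rawconcat ffunE split_rshift; case: (g b) => [x|] //=.
by rewrite !(inj_eq (@Some_inj _)) (inj_eq (@rshift_inj _ _)).
Qed.

Lemma edge_concat_l a u : edge c (lshift l a) u -> exists y, u = lshift l y.
Proof.
rewrite /edge /c /rawconcat ffunE split_lshift.
by case: (f a) => [x|] //= /eqP [<-]; exists x.
Qed.

Lemma edge_concat_r b u : edge c (rshift k b) u -> exists y, u = rshift k y.
Proof.
rewrite /edge /c /rawconcat ffunE split_rshift.
by case: (g b) => [x|] //= /eqP [<-]; exists x.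
Qed.

Let connect_ll a a' :
  connect (edge c) (lshift l a) (lshift l a') = connect (edge f) a a'.
Proof.
apply: connect_imgE; [exact: lshift_inj | exact: edge_concat_ll | exact: edge_concat_l].
Qed.

Let connect_rr b b' :
  connect (edge c) (rshift k b) (rshift k b') = connect (edge g) b b'.
Proof.
apply: connect_imgE; [exact: rshift_inj | exact: edge_concat_rr | exact: edge_concat_r].
Qed.

Lemma reach_concat_ll a a' : reach c (lshift l a) (lshift l a') = reach f a a'.
Proof. by rewrite /reach connect_ll eq_lshift. Qed.

Lemma reach_concat_rr b b' : reach c (rshift k b) (rshift k b') = reach g b b'.
Proof. by rewrite /reach connect_rr eq_rshift. Qed.

Lemma reach_concat_lr a b : reach c (lshift l a) (rshift k b) = false.
Proof.
apply/negP => /andP [_ /(connect_img edge_concat_ll edge_concat_l) [y /eqP]].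
by rewrite eq_rlshift.
Qed.

Lemma reach_concat_rl a b : reach c (rshift k b) (lshift l a) = false.
Proof.
apply/negP => /andP [_ /(connect_img edge_concat_rr edge_concat_r) [y /eqP]].
by rewrite eq_lrshift.
Qed.

Lemma acyclic_concat : acyclic f -> acyclic g -> acyclic c.
Proof.
move=> af ag; apply/forallP => v; apply/forallP => w; apply/implyP.
case: (split_ordP v) => a -> {v}.
  move=> e; have [y Ey] := edge_concat_l e; subst w.
  by rewrite connect_ll; apply: (acyclic_edge af); rewrite -edge_concat_ll.
move=> e; have [y Ey] := edge_concat_r e; subst w.
by rewrite connect_rr; apply: (acyclic_edge ag); rewrite -edge_concat_rr.
Qed.
End Concat.

Lemma ptens_lshift k l (s : 'S_k) (t : 'S_l) a : ptens s t (lshift l a) = lshift l (s a).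
Proof. by rewrite /ptens split_lshift. Qed.

Lemma ptens_rshift k l (s : 'S_k) (t : 'S_l) b : ptens s t (rshift k b) = rshift k (t b).
Proof. by rewrite /ptens split_rshift. Qed.

Lemma ptens_inj k l (s : 'S_k) (t : 'S_l) : injective (ptens s t).
Proof.
move=> i j; case: (split_ordP i) => a -> {i}; case: (split_ordP j) => b -> {j};
rewrite ?ptens_lshift ?ptens_rshift => /eqP; rewrite ?eq_shift // => /eqP /perm_inj -> //.
Qed.

Section Product.
Variables (k l : nat) (pi : 'S_(k + l)).

Definition posl (a : 'I_k) : nat := (pi^-1)%g (lshift l a).
Definition posr (b : 'I_l) : nat := (pi^-1)%g (rshift k b).

Lemma posl_inj : injective posl.
Proof. by move=> a a' /val_inj /perm_inj /lshift_inj. Qed.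

Lemma posr_inj : injective posr.
Proof. by move=> b b' /val_inj /perm_inj /rshift_inj. Qed.

(* The shuffle [e] with [pi = (s (x) t) o e]. *)
Definition shuffle_of (s : 'S_k) (t : 'S_l) : 'S_(k + l) :=
  (pi * (perm (@ptens_inj k l s t))^-1)%g.

Lemma shuffle_factorE s t e :
  isShuffle e && [forall i, pi i == ptens s t (e i)] =
  [&& sorts posl s, sorts posr t & e == shuffle_of s t].
Proof.
set T := perm (@ptens_inj k l s t).
have invE u : ((shuffle_of s t)^-1)%g u = (pi^-1)%g (T u).
  by rewrite invMg invgK permM.
have -> : [forall i, pi i == ptens s t (e i)] = (e == shuffle_of s t).
  apply/forallP/eqP => [H|-> i]; last by rewrite permM -(permE (@ptens_inj k l s t)) permKV.
  apply/permP => i; rewrite permM; apply: (@perm_inj _ T).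
  by rewrite permKV permE; apply/esym/eqP.
case: eqP => [->|_]; last by rewrite !andbF.
rewrite !andbT /isShuffle /sorts; congr (_ && _);
  apply: eq_forallb => i; apply: eq_forallb => j.
  by rewrite !invE /T !(permE (@ptens_inj k l s t)) !ptens_lshift.
by rewrite !invE /T !(permE (@ptens_inj k l s t)) !ptens_rshift.
Qed.

Lemma inS_concat_sorts f g (s0 : 'S_k) (t0 : 'S_l) :
  (forall a b, ((s0^-1)%g a < (s0^-1)%g b) = (posl a < posl b)) ->
  (forall a b, ((t0^-1)%g a < (t0^-1)%g b) = (posr a < posr b)) ->
  inS (rawconcat f g) pi = inS f s0 && inS g t0.
Proof.
move=> ordl ordr; apply/forallP/andP => [H|[/forallP Hf /forallP Hg] i].
  split; apply/forallP => a; apply/forallP => a'.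
    by move: (H (lshift l a)) => /forallP/(_ (lshift l a')); rewrite reach_concat_ll ordl.
  by move: (H (rshift k a)) => /forallP/(_ (rshift k a')); rewrite reach_concat_rr ordr.
apply/forallP => j.
case: (split_ordP i) => a -> {i}; case: (split_ordP j) => a' -> {j}.
- by rewrite reach_concat_ll; move/forallP: (Hf a) => /(_ a'); rewrite ordl.
- by rewrite reach_concat_lr.
- by rewrite reach_concat_rl.
- by rewrite reach_concat_rr; move/forallP: (Hg a) => /(_ a'); rewrite ordr.
Qed.

Variable K : numFieldType.
Local Open Scope ring_scope.

Lemma mulQE (X : Qcomp K k) (Y : Qcomp K l) s0 t0 :
  (forall s, sorts posl s = (s == s0)) -> (forall t, sorts posr t = (t == t0)) ->
  mulQ X Y pi = X s0 * Y t0.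
Proof.
move=> s0E t0E; rewrite ffunE pair_bigA /=.
rewrite (eq_bigr (fun st => if st == (s0, t0) then X st.1 * Y st.2 else 0)).
  by rewrite -big_mkcond big_pred1_eq.
move=> [s t] _ /=; rewrite -pair_eqE /=.
rewrite (eq_bigl (fun e => ((s == s0) && (t == t0)) && (e == shuffle_of s t))).
  by case: ifP => _; [rewrite big_pred1_eq | rewrite big_pred0].
by move=> e; rewrite shuffle_factorE s0E t0E andbA.
Qed.

End Product.

Section Coefficients.
Variable K : numFieldType.
Local Open Scope ring_scope.

Lemma sum_forest_val n (r : rawforest n) (P : pred (rawforest n)) (z : K) :
  acyclic r -> \sum_(F : forest n | P (val F) && (val F == r)) z = if P r then z else 0.
Proof.
move=> r_acyclic; case: ifP => Pr.
  rewrite (big_pred1 (exist _ r r_acyclic)) // => F /=.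
  apply/andP/eqP => [[_ /eqP E]|->]; first exact: val_inj.
  by rewrite /= Pr.
by rewrite big_pred0 // => F; apply/andP => [[PF /eqP E]]; rewrite E Pr in PF.
Qed.

Lemma Theta_mulH k l (x : Hcomp K k) (y : Hcomp K l) pi :
  Theta (mulH x y) pi =
  \sum_F \sum_G (if inS (rawconcat (val F) (val G)) pi then x F * y G else 0).
Proof.
rewrite ffunE (eq_bigr (fun H : forest (k + l) => \sum_F \sum_G
    (if val H == rawconcat (val F) (val G) then x F * y G else 0))); last first.
  by move=> H _; rewrite ffunE; apply: eq_bigr => F _; rewrite big_mkcond.
rewrite exchange_big; apply: eq_bigr => F _.
rewrite exchange_big; apply: eq_bigr => G _.
rewrite -big_mkcondr (sum_forest_val (fun H => inS H pi)) //.
exact: acyclic_concat (valP F) (valP G).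
Qed.

Lemma Theta_mul k l (x : Hcomp K k) (y : Hcomp K l) :
  Theta (mulH x y) = mulQ (Theta x) (Theta y).
Proof.
apply/ffunP => pi.
have [s0 sorts_s0 ord_s0] := sorts_unique (@posl_inj k l pi).
have [t0 sorts_t0 ord_t0] := sorts_unique (@posr_inj k l pi).
rewrite Theta_mulH (mulQE _ _ sorts_s0 sorts_t0) !ffunE big_distrlr /=.
rewrite [RHS]big_mkcond; apply: eq_bigr => F _.
under eq_bigr do rewrite (inS_concat_sorts _ _ ord_s0 ord_t0).
by case: (inS _ s0) => /=; [rewrite [RHS]big_mkcond | rewrite big1].
Qed.

Lemma inS0 (p : rawforest 0) (s : 'S_0) : inS p s.
Proof. by apply/forallP => -[]. Qed.

Lemma Theta_unit : Theta (unitH K) = unitQ K.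
Proof.
apply/ffunP => s; rewrite !ffunE.
have empty_acyclic : acyclic ([ffun=> None] : rawforest 0) by apply/forallP => -[].
rewrite (big_pred1 (exist (fun p => acyclic p) _ empty_acyclic)) ?ffunE // => F.
by rewrite inS0; apply/esym/eqP/val_inj/ffunP => -[].
Qed.

Lemma Theta_counit (x : Hcomp K 0) : counitQ0 (Theta x) = counitH0 x.
Proof.
rewrite /counitQ0 (big_pred1 1%g) => [|s]; last by apply/esym/eqP/permP => -[].
by rewrite ffunE; apply: eq_bigl => F; rewrite inS0.
Qed.

End Coefficients.

Lemma eq_enum_val_index n (A : {set 'I_n}) (w : 'I_n) (k : 'I_#|A|) :
  (w == enum_val k) = (index w (enum A) == k).
Proof.
have sz : size (enum A) = #|A| by rewrite cardE.
rewrite (enum_val_nth w); apply/eqP/eqP => [->|E].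
  by rewrite index_uniq ?enum_uniq ?sz.
have wA : w \in enum A by rewrite -index_mem E sz.
by rewrite -E nth_index.
Qed.

Section Restrict.
Variables (n : nat) (p : rawforest n) (A : {set 'I_n}).
Let r := rawrestr p A.

Lemma edge_restr k k' : edge r k k' = edge p (enum_val k) (enum_val k').
Proof.
rewrite /edge /r /rawrestr ffunE; case: (p (enum_val k)) => [w|] //=.
case: insubP => [u _ Eu|wA] /=.
  by rewrite !(inj_eq (@Some_inj _)) eq_enum_val_index -Eu val_eqE.
rewrite (inj_eq (@Some_inj _)) eq_enum_val_index; apply/esym/negbTE.
by apply: contra wA => /eqP ->; exact: ltn_ord.
Qed.

Let edge_restr_homo k k' : edge r k k' -> edge p (enum_val k) (enum_val k').
Proof. by rewrite edge_restr. Qed.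

Lemma acyclic_restr : acyclic p -> acyclic r.
Proof.
move=> p_acyclic; apply/forallP => k; apply/forallP => k'; apply/implyP => e.
apply/negP => /(homo_connect edge_restr_homo) c.
by move: (acyclic_edge p_acyclic (edge_restr_homo e)); rewrite c.
Qed.

Lemma reach_restr k k' : reach r k k' -> reach p (enum_val k) (enum_val k').
Proof.
move=> /andP [nk ck]; rewrite /reach (inj_eq (@enum_val_inj _ A)) nk.
exact: homo_connect edge_restr_homo _ _ ck.
Qed.

Lemma reach_restr_up : (forall v u, v \in A -> edge p v u -> u \in A) ->
  forall k k', reach r k k' = reach p (enum_val k) (enum_val k').
Proof.
move=> A_up k k'; rewrite /reach (inj_eq (@enum_val_inj _ A)); congr (_ && _).
symmetry; apply: connect_imgE => [||x u /(A_up _ _ (enum_valP x)) uA].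
- exact: enum_val_inj.
- by move=> x y; rewrite edge_restr.
- by exists (enum_rank_in uA u); rewrite enum_rankK_in.
Qed.

Lemma reach_restr_down : (forall v u, v \in A -> edge p u v -> u \in A) ->
  forall k k', reach r k k' = reach p (enum_val k) (enum_val k').
Proof.
move=> A_down k k'; rewrite /reach (inj_eq (@enum_val_inj _ A)); congr (_ && _).
rewrite -[LHS]connect_rev -[RHS]connect_rev /=; symmetry.
apply: (@connect_imgE _ _ _ [rel x y | edge p y x] [rel x y | edge r y x])
  => [||x u /(A_down _ _ (enum_valP x)) uA].
- exact: enum_val_inj.
- by move=> x y /=; rewrite edge_restr.
- by exists (enum_rank_in uA u); rewrite enum_rankK_in.
Qed.
End Restrict.

Definition down_closed n (p : rawforest n) (L : {set 'I_n}) :=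
  forall u v, reach p u v -> v \in L -> u \in L.

Definition tops n (p : rawforest n) (L : {set 'I_n}) :=
  [set v in L | [forall w in L, ~~ reach p v w]].

Section Cuts.
Variables (n : nat) (p : rawforest n).
Hypothesis p_acyclic : acyclic p.

Lemma admissibleP V : admissible p V -> {in V &, forall v w, ~~ reach p v w}.
Proof. by move=> /forall_inP H v w vV wV; move: (H v vV) => /forall_inP; apply. Qed.

Lemma LeaSet_down_closed V : down_closed p (LeaSet p V).
Proof.
move=> u v ruv; rewrite !inE => /orP [vV|/exists_inP [v' v'V rvv']];
  apply/orP; right; apply/exists_inP.
  by exists v.
by exists v' => //; apply: reach_trans ruv rvv'.
Qed.

Lemma admissible_tops L : admissible p (tops p L).
Proof.
apply/forall_inP => v; rewrite inE => /andP [_ /forall_inP H].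
by apply/forall_inP => w; rewrite inE => /andP [wL _]; exact: H.
Qed.

Lemma LeaSet_tops L : down_closed p L -> LeaSet p (tops p L) = L.
Proof.
move=> L_closed; apply/setP => w; rewrite inE; apply/idP/idP.
  case/orP => [|/exists_inP [v]]; first by rewrite inE => /andP [].
  by rewrite inE => /andP [vL _] rwv; apply: L_closed rwv vL.
move=> wL.
(* Take an ancestor [v] of [w] in [L] with the most descendants: it is a top. *)
pose S := [pred v | (v \in L) && connect (edge p) w v].
pose F v := #|[set x | connect (edge p) x v]|.
have Sw : S w by rewrite /S /= wL connect0.
case: (@arg_maxnP _ w S F Sw) => v /andP [vL cwv] maxv.
have vtop : v \in tops p L.
  rewrite inE vL /=; apply/forall_inP => w' w'L; apply/negP => rvw.
  have Sw' : S w' by rewrite /S /= w'L (connect_trans cwv) //; case/andP: rvw.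
  have := maxv _ Sw'; apply/negP; rewrite -ltnNge; apply: proper_card.
  apply/properP; split.
    apply/subsetP => x; rewrite !inE => cxv; apply: connect_trans cxv _.
    by case/andP: rvw.
  exists w'; first by rewrite inE connect0.
  rewrite inE; apply/negP => cw'v; move: rvw => /andP [nvw cvw'].
  by move: nvw; rewrite (connect_antisym p_acyclic cvw' cw'v) eqxx.
case: (w =P v) => [->|nwv]; first by rewrite vtop.
by apply/orP; right; apply/exists_inP; exists v; rewrite // /reach cwv andbT; apply/eqP.
Qed.

Lemma tops_LeaSet V : admissible p V -> tops p (LeaSet p V) = V.
Proof.
move=> adm; apply/setP => v; rewrite inE; apply/idP/idP.
  case/andP; rewrite inE => /orP [//|/exists_inP [v' v'V rvv']] /forall_inP H.
  by move: (H v'); rewrite inE v'V rvv' => /(_ isT).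
move=> vV; rewrite inE vV /=; apply/forall_inP => w; rewrite inE.
case/orP => [wV|/exists_inP [v' v'V rwv']]; first exact: (admissibleP adm vV wV).
apply/negP => rvw; move: (admissibleP adm vV v'V).
by rewrite (reach_trans p_acyclic rvw rwv').
Qed.
End Cuts.

(* [qi q k] reads [q^-1 k] in [nat] and is [0] when [k] is out of range; this
   lets [inSn] test membership in [S_F] for forests and permutations whose
   sizes only agree propositionally. *)
Definition qi a (q : 'S_a) (k : nat) : nat :=
  if @insub _ (fun x => x < a) 'I_a k is Some k' then (q^-1)%g k' else 0.

Definition inSn m (r : rawforest m) a (q : 'S_a) :=
  [forall i : 'I_m, forall j : 'I_m, reach r i j ==> (qi q j < qi q i)].

Lemma qi_cast m a (h : m = a) (q : 'S_a) (k : 'I_m) :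
  qi q k = (q^-1)%g (cast_ord h k).
Proof.
rewrite /qi; case: insubP => [u _ Eu|nk].
  by have -> : u = cast_ord h k by apply: val_inj; rewrite Eu.
have : k < a by rewrite -h ltn_ord.
by rewrite (negbTE nk).
Qed.

Lemma inSn_inS m (r : rawforest m) (q : 'S_m) : inSn r q = inS r q.
Proof. by apply: eq_forallb => i; apply: eq_forallb => j; rewrite /qi !valK. Qed.

Lemma enc_size m (r : rawforest m) : size (enc r) = m.
Proof. by rewrite /enc size_map size_enum_ord. Qed.

Lemma enc_inj m : injective (@enc m).
Proof.
move=> r r' /eq_in_map E; apply/ffunP => i.
by move: (E i (mem_enum _ i)); case: (r i) => [x|]; case: (r' i) => [y|] //= [] /val_inj ->.
Qed.

Definition tail_set a b (s : 'S_(a + b)) : {set 'I_(a + b)} :=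
  [set v | a <= (s^-1)%g v].

Definition std_pair a b (q1 : 'S_a) (q2 : 'S_b) (s : 'S_(a + b)) :=
  isStd q1 (fun i => s (lshift b i)) && isStd q2 (fun j => s (rshift a j)).

Lemma card_tail_set a b (s : 'S_(a + b)) : #|tail_set s| = b.
Proof.
have -> : tail_set s = (s^-1)%g @^-1: (@rshift a b @: [set: 'I_b]).
  apply/setP => v; rewrite !inE; apply/idP/imsetP => [|[y _ ->]]; last first.
    by rewrite /= leq_addr.
  case: (split_ordP ((s^-1)%g v)) => [i|j] ->; last by exists j.
  by rewrite /= leqNgt ltn_ord.
rewrite card_preimset ?card_imset ?cardsT ?card_ord //; [exact: rshift_inj|exact: perm_inj].
Qed.

Lemma tail_set_down_closed n m (p : rawforest (n + m)) (s : 'S_(n + m)) :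
  inS p s -> down_closed p (tail_set s).
Proof.
move=> /forallP S_s u v ruv; rewrite !inE => nv.
by move: (S_s u) => /forallP /(_ v) /implyP /(_ ruv) /ltnW; apply: leq_trans.
Qed.

Lemma std_enum_val n (A : {set 'I_n}) a (hA : #|A| = a) (q : 'S_a) (f : 'I_a -> 'I_n) :
  injective f -> (forall i, f i \in A) -> (forall i j, (q i < q j) = (f i < f j)) ->
  forall i, f i = enum_val (cast_ord (esym hA) (q i)).
Proof.
move=> f_inj fA qf i.
pose g j := cast_ord hA (enum_rank_in (fA i) (f j)).
have gE j : enum_val (cast_ord (esym hA) (g j)) = f j.
  by rewrite /g cast_ordK enum_rankK_in.
have g_inj : injective g by move=> j j' E; apply: f_inj; rewrite -gE E gE.
suff -> : q = perm g_inj by rewrite permE gE.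
by apply: perm_ltn_inj => j j'; rewrite !permE qf -(gE j) -(gE j') enum_val_ltn.
Qed.

Section CutPerm.
Variables (a b : nat) (p : rawforest (a + b)) (V : {set 'I_(a + b)}).
Variables (q1 : 'S_a) (q2 : 'S_b).
Hypothesis p_acyclic : acyclic p.
Let L := LeaSet p V.
Let R := RooSet p V.
Hypothesis card_R : #|R| = a.

Let in_R v : (v \in R) = (v \notin L).
Proof. by rewrite /R /RooSet inE. Qed.

Let R_up v u : v \in R -> edge p v u -> u \in R.
Proof.
move=> vR e; rewrite in_R; apply/negP => uL.
by move: vR; rewrite in_R (LeaSet_down_closed p_acyclic (edge_reach p_acyclic e) uL).
Qed.

Let L_down v u : v \in L -> edge p u v -> u \in L.
Proof. by move=> vL e; exact: (LeaSet_down_closed p_acyclic (edge_reach p_acyclic e) vL). Qed.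

Lemma card_L : #|L| = b.
Proof.
apply/eqP; rewrite -(eqn_add2l a) -{1}card_R addnC.
by rewrite /R /RooSet cardsC card_ord.
Qed.

Let enumR (i : 'I_a) := enum_val (cast_ord (esym card_R) i).
Let enumL (j : 'I_b) := enum_val (cast_ord (esym card_L) j).

(* The permutation whose first [a] letters list [R] in the order [q1] and
   whose last [b] letters list [L] in the order [q2]. *)
Definition cut_fun (u : 'I_(a + b)) :=
  match split u with inl i => enumR (q1 i) | inr j => enumL (q2 j) end.

Lemma cut_fun_inj : injective cut_fun.
Proof.
have enumR_inj : injective enumR by move=> x y /enum_val_inj /cast_ord_inj.
have enumL_inj : injective enumL by move=> x y /enum_val_inj /cast_ord_inj.
have RL x y : enumR x <> enumL y.
  move=> E; have := enum_valP (cast_ord (esym card_R) x).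
  by rewrite in_R -/(enumR x) E enum_valP.
move=> u w; rewrite /cut_fun.
case: (split_ordP u) => i ->; case: (split_ordP w) => j ->.
- by move/enumR_inj/perm_inj ->.
- by move/RL.
- by move/esym/RL.
- by move/enumL_inj/perm_inj ->.
Qed.

Definition cut_perm := perm cut_fun_inj.

Lemma cut_perm_lshift i : cut_perm (lshift b i) = enumR (q1 i).
Proof. by rewrite permE /cut_fun split_lshift. Qed.

Lemma cut_perm_rshift j : cut_perm (rshift a j) = enumL (q2 j).
Proof. by rewrite permE /cut_fun split_rshift. Qed.

Lemma cut_permV_R (k : 'I_#|R|) :
  (cut_perm^-1)%g (enum_val k) = lshift b ((q1^-1)%g (cast_ord card_R k)).
Proof.
by apply: (@perm_inj _ cut_perm); rewrite permKV cut_perm_lshift permKV /enumR cast_ordK.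
Qed.

Lemma cut_permV_L (k : 'I_#|L|) :
  (cut_perm^-1)%g (enum_val k) = rshift a ((q2^-1)%g (cast_ord card_L k)).
Proof.
by apply: (@perm_inj _ cut_perm); rewrite permKV cut_perm_rshift permKV /enumL cast_ordK.
Qed.

Lemma tail_set_cut_perm : tail_set cut_perm = L.
Proof.
apply/setP => v; rewrite inE; case: (boolP (v \in L)) => vL.
  by rewrite -(enum_rankK_in vL vL) cut_permV_L /= leq_addr.
have vR : v \in R by rewrite in_R.
by rewrite -(enum_rankK_in vR vR) cut_permV_R /= leqNgt ltn_ord.
Qed.

Lemma std_pair_cut_perm : std_pair q1 q2 cut_perm.
Proof.
apply/andP; split; apply/forallP => i; apply/forallP => j.
  by rewrite !cut_perm_lshift /enumR enum_val_ltn.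
by rewrite !cut_perm_rshift /enumL enum_val_ltn.
Qed.

Lemma cut_permE s : std_pair q1 q2 s -> tail_set s = L -> s = cut_perm.
Proof.
move=> /andP [/forallP std1 /forallP std2] tail_s.
apply/permP => u; case: (split_ordP u) => [i|j] -> {u}.
  rewrite cut_perm_lshift; apply: (@std_enum_val _ R a card_R q1 (fun i => s (lshift b i))).
  - by move=> x y /perm_inj /lshift_inj.
  - by move=> x; rewrite in_R -tail_s inE permK /= -ltnNge ltn_ord.
  - by move=> x y; move: (std1 x) => /forallP /(_ y) /eqP.
rewrite cut_perm_rshift; apply: (@std_enum_val _ L b card_L q2 (fun j => s (rshift a j))).
- by move=> x y /perm_inj /rshift_inj.
- by move=> x; rewrite -tail_s inE permK /= leq_addr.
- by move=> x y; move: (std2 x) => /forallP /(_ y) /eqP.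
Qed.

Lemma inS_cut_perm :
  inS p cut_perm = inSn (rawrestr p R) q1 && inSn (rawrestr p L) q2.
Proof.
apply/idP/andP => [S_cut|[/forallP S1 /forallP S2]].
  split; apply/forallP => k; apply/forallP => k'; apply/implyP => /reach_restr r.
    move: S_cut => /forallP /(_ _) /forallP /(_ _) /implyP /(_ r).
    by rewrite !cut_permV_R !(qi_cast card_R).
  move: S_cut => /forallP /(_ _) /forallP /(_ _) /implyP /(_ r).
  by rewrite !cut_permV_L !(qi_cast card_L) /= ltn_add2l.
apply/forallP => u; apply/forallP => v; apply/implyP => ruv.
case: (boolP (u \in L)) => uL; case: (boolP (v \in L)) => vL.
- rewrite -(enum_rankK_in uL uL) -(enum_rankK_in vL vL) !cut_permV_L /= ltn_add2l.
  rewrite -!(qi_cast card_L).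
  move: (S2 (enum_rank_in uL u)) => /forallP /(_ (enum_rank_in vL v)) /implyP; apply.
  by rewrite (reach_restr_down L_down) !enum_rankK_in.
- have vR : v \in R by rewrite in_R.
  rewrite -(enum_rankK_in uL uL) -(enum_rankK_in vR vR) cut_permV_L cut_permV_R /=.
  exact: leq_trans (ltn_ord _) (leq_addr _ _).
- by move: uL; rewrite (LeaSet_down_closed p_acyclic ruv vL).
have uR : u \in R by rewrite in_R.
have vR : v \in R by rewrite in_R.
rewrite -(enum_rankK_in uR uR) -(enum_rankK_in vR vR) !cut_permV_R /= -!(qi_cast card_R).
move: (S1 (enum_rank_in uR u)) => /forallP /(_ (enum_rank_in vR v)) /implyP; apply.
by rewrite (reach_restr_up R_up) !enum_rankK_in.
Qed.
End CutPerm.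

Definition std_in_S a b (p : rawforest (a + b)) (q1 : 'S_a) (q2 : 'S_b) :
  pred 'S_(a + b) := fun s => std_pair q1 q2 s && inS p s.

Definition fitting_cut a b (p : rawforest (a + b)) (q1 : 'S_a) (q2 : 'S_b) :
  pred {set 'I_(a + b)} := fun V =>
  [&& admissible p V,
      (#|RooSet p V| == a) && inSn (rawrestr p (RooSet p V)) q1 &
      (#|LeaSet p V| == b) && inSn (rawrestr p (LeaSet p V)) q2].

(* [s |-> tops p (tail_set s)] is a bijection, with inverse [V |-> cut_perm]. *)
Lemma card_std_in_S a b (p : rawforest (a + b)) q1 q2 : acyclic p ->
  #|std_in_S p q1 q2| = #|fitting_cut p q1 q2|.
Proof.
move=> p_acyclic; pose top_cut s := tops p (tail_set s).
have Lea_top s : inS p s -> LeaSet p (top_cut s) = tail_set s.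
  by move=> S_s; apply: LeaSet_tops => //; exact: tail_set_down_closed.
have card_Roo s : inS p s -> #|RooSet p (top_cut s)| = a.
  by move=> S_s; rewrite /RooSet cardsCs setCK Lea_top // card_tail_set card_ord addnK.
have cut_permP s (S_s : inS p s) : std_pair q1 q2 s -> s = cut_perm q1 q2 (card_Roo s S_s).
  by move=> std_s; apply: cut_permE; rewrite ?Lea_top.
rewrite -(card_in_imset (f := top_cut)); last first.
  move=> s1 s2 /andP [std1 S1] /andP [std2 S2] top12.
  by rewrite (cut_permP _ S1 std1); apply/esym/cut_permE; rewrite // top12 Lea_top.
apply: eq_card => V; rewrite !unfold_in; apply/imsetP/idP => [[s S_s ->]|fit_V].
  case/andP: S_s => std_s S_s.
  have := inS_cut_perm q1 q2 p_acyclic (card_Roo s S_s).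
  rewrite -cut_permP // S_s => /esym/andP [S1 S2].
  rewrite /fitting_cut admissible_tops S1 S2 !andbT Lea_top // card_tail_set eqxx andbT.
  by apply/eqP; exact (card_Roo s S_s).
case/and3P: fit_V => adm /andP [/eqP card_R S1] /andP [_ S2].
exists (cut_perm q1 q2 card_R).
  by rewrite unfold_in /std_in_S std_pair_cut_perm inS_cut_perm // S1 S2.
by rewrite /top_cut tail_set_cut_perm tops_LeaSet.
Qed.

Section Coproduct.
Variable K : numFieldType.
Local Open Scope ring_scope.

Lemma sum_forest_enc m a (r : rawforest m) (q : 'S_a) (z : K) : acyclic r ->
  \sum_(F : forest a | inS (val F) q && (enc r == enc (val F))) z =
  if (m == a) && inSn r q then z else 0.
Proof.
move=> r_acyclic; case: (m =P a) => [E|ne]; last first.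
  rewrite big_pred0 // => F; apply/negbTE/nandP; right.
  by apply/eqP => /(congr1 size); rewrite !enc_size.
subst a; rewrite inSn_inS -(sum_forest_val (fun h => inS h q) z r_acyclic).
by apply: eq_bigl => F; rewrite (inj_eq (@enc_inj m)) eq_sym.
Qed.

Lemma deltaQ_ThetaE a b (x : Hcomp K (a + b)) q1 q2 :
  deltaQ (Theta x) (q1, q2) = \sum_F x F *+ #|std_in_S (val F) q1 q2|.
Proof.
rewrite ffunE /=; under [LHS]eq_bigr => s _ do rewrite ffunE.
by rewrite (exchange_big_dep xpredT) //; apply: eq_bigr => F _; rewrite -sumr_const.
Qed.

Lemma Theta2_deltaHE a b (x : Hcomp K (a + b)) q1 q2 :
  Theta2 (deltaH x) (q1, q2) = \sum_F x F *+ #|fitting_cut (val F) q1 q2|.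
Proof.
rewrite ffunE /=; under [LHS]eq_bigr => s _ do rewrite ffunE.
rewrite (exchange_big_dep xpredT) //; apply: eq_bigr => F _.
rewrite -sumr_const (exchange_big_dep (admissible (val F))) /=; last first.
  by move=> pr V _ /andP [].
rewrite big_mkcondr; apply: eq_bigr => V adm.
set R := RooSet _ V; set L := LeaSet _ V.
pose P1 (F1 : forest a) := inS (val F1) q1 && (enc (rawrestr (val F) R) == enc (val F1)).
pose P2 (F2 : forest b) := inS (val F2) q2 && (enc (rawrestr (val F) L) == enc (val F2)).
rewrite (eq_bigl (fun pr => P1 pr.1 && P2 pr.2)); last first.
  move=> [F1 F2]; rewrite /P1 /P2 /= adm andbT.
  by case: (inS _ q1); case: (inS _ q2); rewrite /= ?andbF.
rewrite -(pair_big_dep P1 (fun _ => P2) (fun _ _ => x F)) /P1 /P2 /=.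
rewrite !sum_forest_enc ?acyclic_restr ?(valP F) //.
by case: (_ && inSn _ q1).
Qed.

Lemma Theta_comul a b (x : Hcomp K (a + b)) : deltaQ (Theta x) = Theta2 (deltaH x).
Proof.
apply/ffunP => -[q1 q2]; rewrite deltaQ_ThetaE Theta2_deltaHE.
by apply: eq_bigr => F _; rewrite card_std_in_S //; exact: valP.
Qed.

End Coproduct.

Theorem mainTheorem4 (K : numFieldType) :
  (* multiplicativity *)
  (forall (k l : nat) (x : Hcomp K k) (y : Hcomp K l),
      Theta (mulH x y) = mulQ (Theta x) (Theta y)) /\
  (* unit *)
  Theta (unitH K) = unitQ K /\
  (* counit (degree 0; both counits vanish in positive degree) *)
  (forall x : Hcomp K 0, counitQ0 (Theta x) = counitH0 x) /\
  (* comultiplicativity, on every bihomogeneous component *)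
  (forall (a b : nat) (x : Hcomp K (a + b)),
      deltaQ (Theta x) = Theta2 (deltaH x)).
Proof.
split; first exact: Theta_mul.
split; first exact: Theta_unit.
split; first exact: Theta_counit.
exact: Theta_comul.
Qed.
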